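(* Let $K\subseteq\mathbb{R}^d$ be a topologically regular compact set. Assume that for every $x\in\partial K$ there are $C_x>0$ and a neighbourhood $V_x$ of $x$ such that every $y\in V_x\cap K$ can be joined to $x$ by a rectifiable path in $\mathring K\cup\{x,y\}$ of length at most $C_x|x-y|$. Then $C^1_{\mathrm{int}}(K)=C^1(K)$; i.e., for every $f\in C^1_{\mathrm{int}}(K)$, the continuous extension of $f$ to $K$ belongs to $C^1(K)$ with the continuous extension of its derivative as a continuous derivative on $K$ (and conversely every $f\in C^1(K)$ restricts to an element of $C^1_{\mathrm{int}}(K)$).
   Context: $K$ is topologically regular if it is the closure of its interior $\mathring K$. $C^1_{\mathrm{int}}(K)$ is the set of $f\in C^1(\mathring K)$ such that $f$ and its derivative $df$ extend continuously to $K$. $C^1(K)$ is the set of $f:K\to\mathbb{R}$ admitting a continuous $df:K\to\mathbb{R}^d$ with $\lim_{y\to x,\,y\in K\setminus\{x\}}\frac{f(y)-f(x)-\langle df(x),y-x\rangle}{|y-x|}=0$ for all $x\in K$. A rectifiable path is a continuous map $\gamma:[a,b]\to\mathbb{R}^d$ of finite length $\sup\sum_j|\gamma(t_j)-\gamma(t_{j-1})|$. *)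

From mathcomp Require Import ssreflect ssrbool ssrfun eqtype ssrnat seq choice fintype.
From Stdlib Require Import Reals.
Open Scope R_scope.

Definition Vec (d : nat) := 'I_d -> R.

Definition dot {d : nat} (u v : Vec d) : R :=
  List.fold_right Rplus 0 (List.map (fun i => u i * v i) (enum 'I_d)).
Definition vsub {d : nat} (u v : Vec d) : Vec d := fun i => u i - v i.
Definition vnorm {d : nat} (u : Vec d) : R := sqrt (dot u u).
Definition vdist {d : nat} (x y : Vec d) : R := vnorm (vsub x y).

Definition interiorV {d : nat} (A : Vec d -> Prop) (x : Vec d) : Prop :=
  exists r, 0 < r /\ forall y, vdist y x < r -> A y.
Definition closureV {d : nat} (A : Vec d -> Prop) (x : Vec d) : Prop :=
  forall r, 0 < r -> exists y, A y /\ vdist y x < r.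
Definition boundaryV {d : nat} (A : Vec d -> Prop) (x : Vec d) : Prop :=
  closureV A x /\ closureV (fun y => ~ A y) x.

Definition is_closed {d : nat} (A : Vec d -> Prop) : Prop :=
  forall x, closureV A x -> A x.
Definition is_bounded {d : nat} (A : Vec d -> Prop) : Prop :=
  exists M, forall x, A x -> vnorm x <= M.
(* compact subsets of R^d (Heine-Borel) *)
Definition is_compact {d : nat} (A : Vec d -> Prop) : Prop :=
  is_closed A /\ is_bounded A.

Definition topologically_regular {d : nat} (K : Vec d -> Prop) : Prop :=
  forall x, K x <-> closureV (interiorV K) x.

Definition cont_on_R {d : nat} (A : Vec d -> Prop) (f : Vec d -> R) : Prop :=
  forall x, A x -> forall eps, 0 < eps -> exists delta, 0 < delta /\
    forall y, A y -> vdist y x < delta -> Rabs (f y - f x) < eps.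
Definition cont_on_V {d : nat} (A : Vec d -> Prop) (g : Vec d -> Vec d) : Prop :=
  forall x, A x -> forall eps, 0 < eps -> exists delta, 0 < delta /\
    forall y, A y -> vdist y x < delta -> vdist (g y) (g x) < eps.

Definition deriv_on {d : nat} (A : Vec d -> Prop) (f : Vec d -> R) (df : Vec d -> Vec d) : Prop :=
  forall x, A x -> forall eps, 0 < eps -> exists delta, 0 < delta /\
    forall y, A y -> y <> x -> vdist y x < delta ->
      Rabs ((f y - f x - dot (df x) (vsub y x)) / vdist y x) < eps.

Definition C1_on {d : nat} (A : Vec d -> Prop) (f : Vec d -> R) (df : Vec d -> Vec d) : Prop :=
  cont_on_V A df /\ deriv_on A f df.

Definition C1_int_with {d : nat} (K : Vec d -> Prop) (f : Vec d -> R) (df : Vec d -> Vec d)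
  (F : Vec d -> R) (G : Vec d -> Vec d) : Prop :=
  C1_on (interiorV K) f df /\
  (forall x, interiorV K x -> F x = f x /\ G x = df x) /\
  cont_on_R K F /\ cont_on_V K G.

Fixpoint poly_sum {d : nat} (g : R -> Vec d) (t : nat -> R) (n : nat) : R :=
  match n with
  | O => 0
  | S m => poly_sum g t m + vdist (g (t (S m))) (g (t m))
  end.

Definition rect_path_len_le {d : nat} (g : R -> Vec d) (a b L : R) : Prop :=
  a <= b /\
  (forall s, a <= s <= b -> forall eps, 0 < eps -> exists delta, 0 < delta /\
     forall u, a <= u <= b -> Rabs (u - s) < delta -> vdist (g u) (g s) < eps) /\
  (forall (n : nat) (t : nat -> R), t O = a -> t n = b ->
     (forall j, (j < n)%nat -> t j <= t (S j)) -> poly_sum g t n <= L).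

From mathcomp Require Import ssreflect ssrbool ssrfun eqtype ssrnat seq choice fintype.
From Stdlib Require Import Reals Lra Psatz Classical FunctionalExtensionality.
Open Scope R_scope.

(* At an interior point the extension of f has the derivative of f. At a
   boundary point x, join a nearby y to x by a path of length at most
   C |x - y| running through the interior of K. Along it,
   H := F - <G x, .> has derivative G p - G x at every interior point p, which
   is small because G is continuous at x; a mean value inequality along
   rectifiable paths then gives |H y - H x| <= sup |G p - G x| * C |x - y|,
   that is o(|y - x|). The converse inclusion is a restriction. *)

Definition sumR {I : Type} (l : list I) (f : I -> R) : R :=
  List.fold_right Rplus 0 (List.map f l).

Lemma sumR_nil {I : Type} (f : I -> R) : sumR [::] f = 0.
Proof. by []. Qed.

Lemma sumR_cons {I : Type} (i : I) l f : sumR (i :: l) f = f i + sumR l f.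
Proof. by []. Qed.

Lemma sumR_ext {I : Type} (l : list I) f g :
  (forall i, f i = g i) -> sumR l f = sumR l g.
Proof. by move=> fg; elim: l => // i l IH; rewrite !sumR_cons IH fg. Qed.

Lemma sumR_add {I : Type} (l : list I) f g :
  sumR l (fun i => f i + g i) = sumR l f + sumR l g.
Proof. by elim: l => [|i l IH]; rewrite ?sumR_nil ?sumR_cons ?IH; ring. Qed.

Lemma sumR_scal {I : Type} (l : list I) c f :
  sumR l (fun i => c * f i) = c * sumR l f.
Proof. by elim: l => [|i l IH]; rewrite ?sumR_nil ?sumR_cons ?IH; ring. Qed.

Lemma sumR_ge0 {I : Type} (l : list I) f : (forall i, 0 <= f i) -> 0 <= sumR l f.
Proof.
move=> f_ge0; elim: l => [|i l IH]; rewrite ?sumR_nil ?sumR_cons; last have := f_ge0 i; lra.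
Qed.

Lemma sumR_eq0 (I : eqType) (l : list I) f :
  (forall i, 0 <= f i) -> sumR l f = 0 -> forall i, i \in l -> f i = 0.
Proof.
move=> f_ge0; elim: l => // j l IH; rewrite sumR_cons => sum0 i.
have := sumR_ge0 l f f_ge0; have := f_ge0 j => fj_ge0 sum_ge0.
rewrite in_cons => /orP [/eqP -> | i_l]; first lra.
by apply: IH => //; lra.
Qed.

Lemma dotE {d} (u v : Vec d) : dot u v = sumR (enum 'I_d) (fun i => u i * v i).
Proof. by []. Qed.

Lemma dotC {d} (u v : Vec d) : dot u v = dot v u.
Proof. by rewrite !dotE; apply: sumR_ext => i; ring. Qed.

Lemma dot_vsubr {d} (u w z : Vec d) : dot u (vsub w z) = dot u w - dot u z.
Proof.
rewrite !dotE (sumR_ext (enum 'I_d) _ (fun i => u i * w i + -1 * (u i * z i))).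
  by rewrite sumR_add sumR_scal; ring.
by move=> i; rewrite /vsub; ring.
Qed.

Lemma dot_vsubl {d} (u w z : Vec d) : dot (vsub w z) u = dot w u - dot z u.
Proof. by rewrite dotC dot_vsubr (dotC u w) (dotC u z). Qed.

Lemma dot_ge0 {d} (u : Vec d) : 0 <= dot u u.
Proof. by rewrite dotE; apply: sumR_ge0 => i; nra. Qed.

Lemma vnorm_ge0 {d} (u : Vec d) : 0 <= vnorm u.
Proof. exact: sqrt_pos. Qed.

Lemma vnorm_sqr {d} (u : Vec d) : vnorm u * vnorm u = dot u u.
Proof. exact/sqrt_sqrt/dot_ge0. Qed.

Lemma quadratic_ge0_discr A B C : 0 <= C ->
  (forall l, 0 <= A - 2 * l * B + l * l * C) -> B * B <= A * C.
Proof.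
move=> C_ge0 q_ge0; case: (Rle_lt_or_eq_dec _ _ C_ge0) => [C_gt0 | C0]; last subst C.
- have := q_ge0 (B / C).
  have -> : A - 2 * (B / C) * B + B / C * (B / C) * C = (A * C - B * B) / C by field; lra.
  move=> q; have : 0 <= (A * C - B * B) / C * C by nra.
  have -> : (A * C - B * B) / C * C = A * C - B * B by field; lra.
  lra.
- case: (Req_dec B 0) => [-> | B_neq0]; first lra.
  have := q_ge0 ((A + 1) / (2 * B)).
  have -> : A - 2 * ((A + 1) / (2 * B)) * B + (A + 1) / (2 * B) * ((A + 1) / (2 * B)) * 0
    = -1 by field.
  lra.
Qed.

Lemma Cauchy_Schwarz {d} (u v : Vec d) : Rabs (dot u v) <= vnorm u * vnorm v.
Proof.
have sqr_le : dot u v * dot u v <= dot u u * dot v v.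
  apply: quadratic_ge0_discr => [|l]; first exact: dot_ge0.
  have := dot_ge0 (fun i => u i - l * v i); rewrite !dotE.
  rewrite (sumR_ext (enum 'I_d) _
    (fun i => u i * u i + (-2 * l * (u i * v i) + l * l * (v i * v i)))); last by move=> i; ring.
  by rewrite !sumR_add !sumR_scal; lra.
rewrite /vnorm -sqrt_mult; try exact: dot_ge0.
rewrite -sqrt_Rsqr_abs; apply: sqrt_le_1_alt; rewrite /Rsqr; lra.
Qed.

Lemma vdistC {d} (x y : Vec d) : vdist x y = vdist y x.
Proof.
by rewrite /vdist /vnorm !dotE; congr sqrt; apply: sumR_ext => i; rewrite /vsub; ring.
Qed.

Lemma vdist_ge0 {d} (x y : Vec d) : 0 <= vdist x y.
Proof. exact: vnorm_ge0. Qed.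

Lemma vdist_xx {d} (x : Vec d) : vdist x x = 0.
Proof.
rewrite /vdist /vnorm dotE (sumR_ext (enum 'I_d) _ (fun i => 0 * x i)).
  by rewrite sumR_scal Rmult_0_l sqrt_0.
by move=> i; rewrite /vsub; ring.
Qed.

Lemma vdist_eq0 {d} (x y : Vec d) : vdist x y = 0 -> x = y.
Proof.
move=> /(sqrt_eq_0 _ (dot_ge0 _)) /sumR_eq0 sq_eq0.
apply: functional_extensionality => i.
have := sq_eq0 (fun i => Rle_0_sqr (vsub x y i)) i (mem_enum _ i).
rewrite /vsub; nra.
Qed.

Lemma vdist_gt0 {d} {x y : Vec d} : x <> y -> 0 < vdist x y.
Proof.
move=> x_neq_y; case: (Rle_lt_or_eq_dec _ _ (vdist_ge0 x y)) => // dist0.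
by case: x_neq_y; apply: vdist_eq0.
Qed.

Lemma vdist_triangle {d} (x y z : Vec d) : vdist x z <= vdist x y + vdist y z.
Proof.
set p := vsub x y; set q := vsub y z.
have expand : dot (vsub x z) (vsub x z) = dot p p + 2 * dot p q + dot q q.
  rewrite !dotE (sumR_ext (enum 'I_d) _
    (fun i => p i * p i + (2 * (p i * q i) + q i * q i))); last by move=> i; rewrite /p /q /vsub; ring.
  by rewrite !sumR_add sumR_scal; ring.
have := Cauchy_Schwarz p q; have := vnorm_sqr p; have := vnorm_sqr q.
have := vnorm_ge0 p; have := vnorm_ge0 q; have := Rle_abs (dot p q) => *.
rewrite /vdist -/p -/q {1}/vnorm expand -(sqrt_Rsqr (vnorm p + vnorm q)); last lra.
apply: sqrt_le_1_alt; rewrite /Rsqr; nra.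
Qed.

Lemma dot_lipschitz {d} (v z w : Vec d) :
  Rabs (dot v z - dot v w) <= vnorm v * vdist z w.
Proof. by rewrite -dot_vsubr; apply: Cauchy_Schwarz. Qed.

Definition subdivision (a b : R) (t : nat -> R) (n : nat) : Prop :=
  t O = a /\ t n = b /\ (forall j, (j < n)%nat -> t j <= t j.+1).

Definition snoc_pt (t : nat -> R) (n : nat) (v : R) : nat -> R :=
  fun j => if (j <= n)%nat then t j else v.

Definition pair_pt (a b : R) : nat -> R := fun j => if j is O then a else b.

Lemma subdivision_pair {a b} : a <= b -> subdivision a b (pair_pt a b) 1.
Proof. by move=> ab; split; [|split] => // [[|j]]. Qed.

Lemma subdivision_snoc {a b c t n} :
  subdivision a b t n -> b <= c -> subdivision a c (snoc_pt t n c) n.+1.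
Proof.
move=> [t0 [tn t_incr]] bc; rewrite /snoc_pt; split; [|split] => //.
- by rewrite ltnn.
- move=> j; case: (ltngtP j n) => [jn _ | _ _ | -> _]; [exact: t_incr | lra | by rewrite tn].
Qed.

Lemma poly_sum_ext {d} (g : R -> Vec d) t t' n :
  (forall j, (j <= n)%nat -> t j = t' j) -> poly_sum g t n = poly_sum g t' n.
Proof.
elim: n => [|n IH] tt' //=.
by rewrite IH => [|j jn]; rewrite ?tt' ?leqnSn //; apply: leqW.
Qed.

Lemma poly_sum_ge0 {d} (g : R -> Vec d) t n : 0 <= poly_sum g t n.
Proof. by elim: n => [|n IH] /=; last have := vdist_ge0 (g (t n.+1)) (g (t n)); lra. Qed.

Lemma poly_sum_snoc {d} (g : R -> Vec d) t n c :
  poly_sum g (snoc_pt t n c) n.+1 = poly_sum g t n + vdist (g c) (g (t n)).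
Proof.
rewrite /= (poly_sum_ext g _ t n) => [|j jn]; last by rewrite /snoc_pt jn.
by rewrite /snoc_pt ltnn leqnn.
Qed.

Definition cont_path {d} (g : R -> Vec d) (a b : R) : Prop :=
  forall s, a <= s <= b -> forall eps, 0 < eps -> exists delta, 0 < delta /\
    forall u, a <= u <= b -> Rabs (u - s) < delta -> vdist (g u) (g s) < eps.

Section RectifiablePath.
Variables (d : nat) (g : R -> Vec d) (a b L : R).
Hypothesis g_rect : rect_path_len_le g a b L.

Lemma rect_path_cont : cont_path g a b.
Proof. by case: g_rect => _ []. Qed.

Lemma rect_path_subdivision_le {c t n} :
  subdivision a c t n -> c <= b -> poly_sum g t n <= L.
Proof.
move=> sub_t cb; have [_ [_ len_le]] := g_rect.
have [t0 [tn t_incr]] := subdivision_snoc sub_t cb.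
have := len_le n.+1 _ t0 tn t_incr; rewrite poly_sum_snoc.
by have := vdist_ge0 (g b) (g (t n)); lra.
Qed.

Lemma rect_path_dist_le {s} : a <= s <= b -> vdist (g s) (g a) <= L.
Proof.
move=> [a_le_s s_le_b]; have := rect_path_subdivision_le (subdivision_pair a_le_s) s_le_b.
by rewrite /= /pair_pt; lra.
Qed.

Lemma rect_path_len_ge0 : 0 <= L.
Proof.
have ab : a <= b by case: g_rect.
by have := rect_path_dist_le (conj (Rle_refl a) ab); rewrite vdist_xx.
Qed.

Lemma rect_path_restrict {c} : a <= c <= b -> rect_path_len_le g a c L.
Proof.
move=> [ac cb]; split; [done | split].
- move=> s [a_le_s s_le_c] eps eps_gt0.
  have [delta [delta_gt0 near]] := rect_path_cont _ (conj a_le_s (Rle_trans _ _ _ s_le_c cb)) _ eps_gt0.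
  by exists delta; split=> // u [au uc]; apply: near; lra.
- by move=> n t t0 tn t_incr; apply: (rect_path_subdivision_le (conj t0 (conj tn t_incr))).
Qed.

End RectifiablePath.

Arguments rect_path_cont {d g a b L}.
Arguments rect_path_subdivision_le {d g a b L} g_rect {c t n}.
Arguments rect_path_dist_le {d g a b L} g_rect {s}.
Arguments rect_path_len_ge0 {d g a b L}.
Arguments rect_path_restrict {d g a b L} g_rect {c}.

Lemma real_induction (c e : R) (Q : R -> Prop) : c <= e -> Q c ->
  (forall s, c <= s <= e -> exists delta, 0 < delta /\
     forall t, c <= t -> s - delta < t <= s -> Q t ->
       forall u, s <= u <= e -> u < s + delta -> Q u) ->
  Q e.
Proof.
move=> ce Qc step.
set A := fun t => c <= t <= e /\ Q t.
have [m [m_ub m_lub]] := completeness A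
  (ex_intro _ e (fun t At => proj2 (proj1 At))) (ex_intro _ c (conj (conj (Rle_refl c) ce) Qc)).
have cm : c <= m by apply: m_ub; split; [lra|].
have me : m <= e by apply: m_lub => t [[_ te] _].
have [delta [delta_gt0 step_m]] := step m (conj cm me).
have [t [[[ct te] Qt] mt]] : exists t, A t /\ m - delta < t.
  apply: NNPP => no_t; have : m <= m - delta; last lra.
  apply: m_lub => t At; apply: Rnot_lt_le => tm; apply: no_t; by exists t.
have Q_near u : m <= u <= e -> u < m + delta -> Q u.
  by move=> mu ud; apply: (step_m t) => //; have := m_ub t (conj (conj ct te) Qt); lra.
suff -> : e = m by apply: Q_near; lra.
apply: NNPP => e_neq_m.
have m_lt_u : m < Rmin e (m + delta / 2) by apply: Rmin_glb_lt; lra.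
have u_le_e := Rmin_l e (m + delta / 2); have u_le := Rmin_r e (m + delta / 2).
have : Rmin e (m + delta / 2) <= m; last lra.
by apply: m_ub; split; [lra | apply: Q_near; lra].
Qed.

Definition cont_interval (phi : R -> R) (a b : R) : Prop :=
  forall s, a <= s <= b -> forall eps, 0 < eps -> exists delta, 0 < delta /\
    forall u, a <= u <= b -> Rabs (u - s) < delta -> Rabs (phi u - phi s) < eps.

Lemma cont_interval_restrict {phi a b c} :
  cont_interval phi a b -> c <= b -> cont_interval phi a c.
Proof.
move=> phi_cont cb s [a_le_s s_le_c] eps eps_gt0.
have [delta [delta_gt0 near]] := phi_cont s (conj a_le_s (Rle_trans _ _ _ s_le_c cb)) _ eps_gt0.
by exists delta; split=> // u [au uc]; apply: near; lra.
Qed.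

Lemma first_hit {phi : R -> R} {a b c : R} :
  a <= b -> cont_interval phi a b -> phi a <> c -> phi b = c ->
  exists m, a < m <= b /\ phi m = c /\ forall u, a <= u < m -> phi u <> c.
Proof.
move=> ab phi_cont phia_neq phib.
set E := fun s => a <= s <= b /\ forall u, a <= u <= s -> phi u <> c.
have Ea : E a by split=> [|u au]; [lra | have -> : u = a by lra].
have [m [m_ub m_lub]] := completeness E
  (ex_intro _ b (fun t Et => proj2 (proj1 Et))) (ex_intro _ a Ea).
have am : a <= m by apply: m_ub.
have mb : m <= b by apply: m_lub => t [[_ tb] _].
have before u : a <= u < m -> phi u <> c.
  move=> [au um]; have [s [[_ Es] us]] : exists s, E s /\ u < s.
    apply: NNPP => no_s; have : m <= u; last lra.
    apply: m_lub => t Et; apply: Rnot_lt_le => ut; apply: no_s; by exists t.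
  by apply: Es; lra.
have phim : phi m = c.
  apply: NNPP => phim_neq.
  have [delta [delta_gt0 near]] :=
    phi_cont m (conj am mb) _ (Rabs_pos_lt _ (Rminus_eq_contra _ _ phim_neq)).
  have far u : a <= u <= b -> Rabs (u - m) < delta -> phi u <> c.
    by move=> au um phiu; have := near u au um; rewrite phiu Rabs_minus_sym; lra.
  case: (Rle_lt_or_eq_dec _ _ mb) => [m_lt_b | m_eq_b]; last by rewrite m_eq_b in phim_neq.
  have m_lt_u : m < Rmin b (m + delta / 2) by apply: Rmin_glb_lt; lra.
  have u_le_b := Rmin_l b (m + delta / 2); have u_le := Rmin_r b (m + delta / 2).
  have : Rmin b (m + delta / 2) <= m; last lra.
  apply: m_ub; split=> [|v [av vu]]; first lra.
  case: (Rlt_le_dec v m) => [vm | mv]; first exact: before.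
  by apply: far; [lra | apply: Rabs_def1; lra].
exists m; split; [split=> // | split=> //].
by case: (Rle_lt_or_eq_dec _ _ am) => // am_eq; rewrite am_eq in phia_neq.
Qed.

Definition lipschitz_along {d} (g : R -> Vec d) (phi : R -> R) (a b K s : R) : Prop :=
  exists delta, 0 < delta /\ forall u, a <= u <= b -> Rabs (u - s) < delta ->
    Rabs (phi u - phi s) <= K * vdist (g u) (g s).

Definition increment_le_length {d} (g : R -> Vec d) (phi : R -> R) (a K eps tau : R) : Prop :=
  exists t n, subdivision a tau t n /\ Rabs (phi tau - phi a) <= K * poly_sum g t n + eps.

Section PathMeanValue.
Variables (d : nat) (g : R -> Vec d) (phi : R -> R) (a b K : R).
Hypotheses (K_ge0 : 0 <= K) (phi_cont : cont_interval phi a b).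

Lemma increment_le_length_pair eps u :
  a <= u -> Rabs (phi u - phi a) <= eps -> increment_le_length g phi a K eps u.
Proof.
move=> au incr_le; exists (pair_pt a u), 1%nat; split; first exact: subdivision_pair.
by have := poly_sum_ge0 g (pair_pt a u) 1; nra.
Qed.

Lemma increment_le_length_step {eps s} : 0 < eps -> a <= s <= b ->
  phi s = phi a \/ lipschitz_along g phi a b K s ->
  exists delta, 0 < delta /\ forall t, a <= t -> s - delta < t <= s ->
    increment_le_length g phi a K eps t ->
    forall u, s <= u <= b -> u < s + delta -> increment_le_length g phi a K eps u.
Proof.
move=> eps_gt0 s_ab [flat | [delta [delta_gt0 lip]]].
- have [delta [delta_gt0 near]] := phi_cont _ s_ab _ eps_gt0.
  exists delta; split=> // t _ _ _ u su us; apply: increment_le_length_pair; first lra.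
  by rewrite -flat; apply/Rlt_le/near; [lra | apply: Rabs_def1; lra].
- exists delta; split=> // t a_le_t ts [tt [n [[t0 [tn t_incr]] incr_t]]] u su us.
  have lip_t := lip t (conj a_le_t (Rle_trans _ _ _ (proj2 ts) (proj2 s_ab)))
    (ltac:(apply: Rabs_def1; lra)).
  have lip_u := lip u (ltac:(lra)) (ltac:(apply: Rabs_def1; lra)).
  exists (snoc_pt (snoc_pt tt n s) n.+1 u), n.+2; split.
    apply: (subdivision_snoc (b := s)); last lra.
    by apply: (subdivision_snoc (b := t)); [split | lra].
  rewrite !poly_sum_snoc /snoc_pt ltnn tn (vdistC (g s)).
  rewrite -Rabs_Ropp in lip_t.
  have := Rabs_triang (phi u - phi s) (- (phi t - phi s) + (phi t - phi a)).
  have := Rabs_triang (- (phi t - phi s)) (phi t - phi a).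
  have -> : phi u - phi s + (- (phi t - phi s) + (phi t - phi a)) = phi u - phi a by ring.
  lra.
Qed.

Lemma path_mean_value_ineq_flat_or_lip L :
  rect_path_len_le g a b L ->
  (forall s, a <= s < b -> phi s = phi a \/ lipschitz_along g phi a b K s) ->
  Rabs (phi b - phi a) <= K * L.
Proof.
move=> g_rect flat_or_lip; have L_ge0 := rect_path_len_ge0 g_rect.
have ab : a <= b by case: g_rect.
case: (Rle_lt_or_eq_dec _ _ ab) => [a_lt_b | <-]; last by rewrite Rminus_diag Rabs_R0; nra.
apply: le_epsilon => eps eps_gt0; have eps2_gt0 : 0 < eps / 2 by lra.
have [delta [delta_gt0 near_b]] := phi_cont _ (conj ab (Rle_refl b)) _ eps2_gt0.
have [e [ae e_lt_b be]] : exists e, [/\ a <= e, e < b & b - delta < e].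
  exists (Rmax a (b - delta / 2)); split; [exact: Rmax_l | apply: Rmax_lub_lt; lra |].
  by have := Rmax_r a (b - delta / 2); lra.
have [t [n [sub_t incr_e]]] : increment_le_length g phi a K (eps / 2) e.
  apply: (real_induction _ _ (increment_le_length g phi a K (eps / 2)) ae).
    by apply: increment_le_length_pair; rewrite ?Rminus_diag ?Rabs_R0; lra.
  move=> s [a_le_s s_le_e].
  have [eta [eta_gt0 step]] := increment_le_length_step eps2_gt0
    (conj a_le_s (Rle_trans _ _ _ s_le_e (Rlt_le _ _ e_lt_b))) (flat_or_lip s (ltac:(lra))).
  by exists eta; split=> // t' a_le_t' t's incr_t' u [su ue]; apply: (step t') => //; lra.
have len_le := rect_path_subdivision_le g_rect sub_t (Rlt_le _ _ e_lt_b).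
have near_e := near_b e (ltac:(lra)) (ltac:(apply: Rabs_def1; lra)).
have := Rabs_triang (phi b - phi e) (phi e - phi a).
have -> : phi b - phi e + (phi e - phi a) = phi b - phi a by ring.
rewrite Rabs_minus_sym in near_e; have := Rmult_le_compat_l _ _ _ K_ge0 len_le.
lra.
Qed.

End PathMeanValue.

Arguments path_mean_value_ineq_flat_or_lip {d g phi a b K} K_ge0 phi_cont {L}.

Lemma lipschitz_along_restrict {d} {g : R -> Vec d} {phi a b c K s} :
  lipschitz_along g phi a b K s -> c <= b -> lipschitz_along g phi a c K s.
Proof.
move=> [delta [delta_gt0 lip]] cb.
by exists delta; split=> // u [au uc]; apply: lip; lra.
Qed.

(* Times where phi already equals phi b carry no local estimate; stopping at the
   first of them reduces to the previous lemma. *)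
Lemma path_mean_value_ineq {d} {g : R -> Vec d} {phi a b K L} :
  0 <= K -> cont_interval phi a b -> rect_path_len_le g a b L ->
  (forall s, a <= s <= b ->
     [\/ phi s = phi a, phi s = phi b | lipschitz_along g phi a b K s]) ->
  Rabs (phi b - phi a) <= K * L.
Proof.
move=> K_ge0 phi_cont g_rect alt.
have L_ge0 := rect_path_len_ge0 g_rect; have ab : a <= b by case: g_rect.
case: (Req_dec (phi a) (phi b)) => [-> | phia_neq]; first by rewrite Rminus_diag Rabs_R0; nra.
have [m [[a_lt_m mb] [phim before_m]]] := first_hit ab phi_cont phia_neq erefl.
rewrite -phim; apply: (path_mean_value_ineq_flat_or_lip K_ge0
  (cont_interval_restrict phi_cont mb) (rect_path_restrict g_rect (conj (Rlt_le _ _ a_lt_m) mb))).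
move=> s [a_le_s s_lt_m]; case: (alt s (ltac:(lra))) => [flat | phis | lip].
- by left.
- by case: (before_m s (conj a_le_s s_lt_m)).
- by right; exact: (lipschitz_along_restrict lip mb).
Qed.

Lemma Rabs_div_pos q D : 0 < D -> Rabs (q / D) = Rabs q / D.
Proof. by move=> D_gt0; rewrite /Rdiv Rabs_mult Rabs_inv (Rabs_pos_eq D) //; lra. Qed.

Lemma interior_sub {d} {K : Vec d -> Prop} {z} : interiorV K z -> K z.
Proof. by move=> [r [r_gt0 ball]]; apply: ball; rewrite vdist_xx. Qed.

Lemma interior_ball {d} {K : Vec d -> Prop} {p} :
  interiorV K p -> exists r, 0 < r /\ forall z, vdist z p < r -> interiorV K z.
Proof.
move=> [r [r_gt0 ball]]; exists (r / 2); split=> [|z zp]; first lra.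
exists (r / 2); split=> [|w wz]; first lra.
by apply: ball; have := vdist_triangle w z p; lra.
Qed.

Lemma C1_on_sub {d} {A B : Vec d -> Prop} {F G} :
  (forall x, A x -> B x) -> C1_on B F G -> C1_on A F G.
Proof.
move=> AB [G_cont F_deriv]; split=> x Ax eps eps_gt0.
- have [delta [delta_gt0 near]] := G_cont x (AB x Ax) eps eps_gt0.
  by exists delta; split=> // y /AB; apply: near.
- have [delta [delta_gt0 near]] := F_deriv x (AB x Ax) eps eps_gt0.
  by exists delta; split=> // y /AB; apply: near.
Qed.

Lemma deriv_on_cont {d} {A : Vec d -> Prop} {F G} : deriv_on A F G -> cont_on_R A F.
Proof.
move=> F_deriv x Ax eps eps_gt0.
have [delta [delta_gt0 near]] := F_deriv x Ax 1 Rlt_0_1.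
have c_gt0 : 0 < vnorm (G x) + 1 by have := vnorm_ge0 (G x); lra.
exists (Rmin delta (eps / (vnorm (G x) + 1))).
split=> [|y Ay yx]; first by apply: Rmin_glb_lt => //; apply: Rdiv_lt_0_compat; lra.
case: (classic (y = x)) => [-> | y_neq_x]; first by rewrite Rminus_diag Rabs_R0.
have yx_gt0 := vdist_gt0 y_neq_x.
have := near y Ay y_neq_x (Rlt_le_trans _ _ _ yx (Rmin_l _ _)).
rewrite Rabs_div_pos // => /(Rmult_lt_compat_r (vdist y x) _ _ yx_gt0).
have -> : Rabs (F y - F x - dot (G x) (vsub y x)) / vdist y x * vdist y x
  = Rabs (F y - F x - dot (G x) (vsub y x)) by field; lra.
have yx_small : vdist y x * (vnorm (G x) + 1) < eps.
  have := Rmult_lt_compat_r _ _ _ c_gt0 (Rlt_le_trans _ _ _ yx (Rmin_r _ _)).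
  by have -> : eps / (vnorm (G x) + 1) * (vnorm (G x) + 1) = eps by field; lra.
have := Cauchy_Schwarz (G x) (vsub y x); rewrite -/(vdist y x).
have := Rabs_triang (F y - F x - dot (G x) (vsub y x)) (dot (G x) (vsub y x)).
have -> : F y - F x - dot (G x) (vsub y x) + dot (G x) (vsub y x) = F y - F x by ring.
by have := vnorm_ge0 (G x); nra.
Qed.

Lemma C1_on_C1_int {d} (K : Vec d -> Prop) F G : C1_on K F G -> C1_int_with K F G F G.
Proof.
move=> C1_F; have [G_cont F_deriv] := C1_F.
split; first exact: (C1_on_sub (@interior_sub d K) C1_F).
by split; [| split; [exact: (deriv_on_cont F_deriv) |]].
Qed.

Definition deriv_at {d} (A : Vec d -> Prop) (f : Vec d -> R) (v x : Vec d) : Prop :=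
  forall eps, 0 < eps -> exists delta, 0 < delta /\
    forall y, A y -> y <> x -> vdist y x < delta ->
      Rabs ((f y - f x - dot v (vsub y x)) / vdist y x) < eps.

Definition short_paths_at {d} (K : Vec d -> Prop) (x : Vec d) (C r : R) : Prop :=
  forall y, K y -> vdist y x < r ->
    exists (a b : R) (g : R -> Vec d),
      g a = x /\ g b = y /\ rect_path_len_le g a b (C * vdist x y) /\
      (forall s, a <= s <= b -> interiorV K (g s) \/ g s = x \/ g s = y).

Lemma cont_on_R_sub_dot {d} {K : Vec d -> Prop} {F} v :
  cont_on_R K F -> cont_on_R K (fun z => F z - dot v z).
Proof.
move=> F_cont x Kx eps eps_gt0.
have c_gt0 : 0 < vnorm v + 1 by have := vnorm_ge0 v; lra.
have [delta [delta_gt0 near]] := F_cont x Kx (eps / 2) (ltac:(lra)).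
exists (Rmin delta (eps / (2 * (vnorm v + 1)))).
split=> [|y Ky yx]; first by apply: Rmin_glb_lt => //; apply: Rdiv_lt_0_compat; lra.
have F_near := near y Ky (Rlt_le_trans _ _ _ yx (Rmin_l _ _)).
have dot_near : vdist y x * (vnorm v + 1) < eps / 2.
  have := Rmult_lt_compat_r _ _ _ c_gt0 (Rlt_le_trans _ _ _ yx (Rmin_r _ _)).
  by have -> : eps / (2 * (vnorm v + 1)) * (vnorm v + 1) = eps / 2 by field; lra.
have := dot_lipschitz v y x; have := vdist_ge0 y x; have := vnorm_ge0 v.
have := Rabs_triang (F y - F x) (- (dot v y - dot v x)); rewrite Rabs_Ropp.
have -> : F y - F x + - (dot v y - dot v x) = F y - dot v y - (F x - dot v x) by ring.
nra.
Qed.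

Lemma cont_on_R_comp_path {d} {K : Vec d -> Prop} {H} {g : R -> Vec d} {a b} :
  cont_on_R K H -> cont_path g a b -> (forall s, a <= s <= b -> K (g s)) ->
  cont_interval (fun s => H (g s)) a b.
Proof.
move=> H_cont g_cont Kg s s_ab eps eps_gt0.
have [eta [eta_gt0 H_near]] := H_cont (g s) (Kg s s_ab) eps eps_gt0.
have [delta [delta_gt0 g_near]] := g_cont s s_ab eta eta_gt0.
by exists delta; split=> // u u_ab us; apply: H_near; [apply: Kg | apply: g_near].
Qed.

Lemma lipschitz_along_comp {d} {g : R -> Vec d} {H a b M s} :
  cont_path g a b -> a <= s <= b ->
  (exists delta, 0 < delta /\ forall z, vdist z (g s) < delta ->
     Rabs (H z - H (g s)) <= M * vdist z (g s)) ->
  lipschitz_along g (fun s => H (g s)) a b M s.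
Proof.
move=> g_cont s_ab [eta [eta_gt0 lip]].
have [delta [delta_gt0 g_near]] := g_cont s s_ab eta eta_gt0.
by exists delta; split=> // u u_ab us; apply/lip/g_near.
Qed.

Lemma deriv_local_lipschitz {d} {A : Vec d -> Prop} {f df v p M} :
  deriv_on A f df -> A p -> vdist (df p) v < M ->
  exists delta, 0 < delta /\ forall z, A z -> vdist z p < delta ->
    Rabs (f z - dot v z - (f p - dot v p)) <= M * vdist z p.
Proof.
move=> f_deriv Ap df_near.
have [delta [delta_gt0 near]] := f_deriv p Ap (M - vdist (df p) v) (ltac:(lra)).
exists delta; split=> // z Az zp.
case: (classic (z = p)) => [-> | z_neq_p].
  by rewrite vdist_xx !Rminus_diag Rabs_R0; lra.
have zp_gt0 := vdist_gt0 z_neq_p.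
have := near z Az z_neq_p zp; rewrite Rabs_div_pos //.
move=> /(Rmult_lt_compat_r (vdist z p) _ _ zp_gt0).
have -> : Rabs (f z - f p - dot (df p) (vsub z p)) / vdist z p * vdist z p
  = Rabs (f z - f p - dot (df p) (vsub z p)) by field; lra.
have := Cauchy_Schwarz (vsub (df p) v) (vsub z p).
rewrite -/(vdist z p) -/(vdist (df p) v) dot_vsubl (dot_vsubr v).
have := Rabs_triang (f z - f p - dot (df p) (vsub z p))
  (dot (df p) (vsub z p) - (dot v z - dot v p)).
have -> : f z - f p - dot (df p) (vsub z p) + (dot (df p) (vsub z p) - (dot v z - dot v p))
  = f z - dot v z - (f p - dot v p) by ring.
by have := vdist_ge0 z p; nra.
Qed.

Lemma not_interior_boundary {d} {K : Vec d -> Prop} {x} :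
  K x -> ~ interiorV K x -> boundaryV K x.
Proof.
move=> Kx not_Ix; split=> r r_gt0; first by exists x; rewrite vdist_xx.
apply: NNPP => no_outside; apply: not_Ix; exists r; split=> // y yx.
by apply: NNPP => not_Ky; apply: no_outside; exists y.
Qed.

Section C1Interior.
Variables (d : nat) (K : Vec d -> Prop) (f : Vec d -> R) (df : Vec d -> Vec d).
Variables (F : Vec d -> R) (G : Vec d -> Vec d).
Hypothesis C1_f : C1_int_with K f df F G.

Lemma C1_int_deriv_at_interior {x} : interiorV K x -> deriv_at K F (G x) x.
Proof.
have [[_ f_deriv] [ext _]] := C1_f.
move=> Ix eps eps_gt0; have [r [r_gt0 ball]] := interior_ball Ix.
have [delta [delta_gt0 near]] := f_deriv x Ix eps eps_gt0.
exists (Rmin delta r); split=> [|y _ y_neq_x yx]; first exact: Rmin_glb_lt.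
have Iy := ball y (Rlt_le_trans _ _ _ yx (Rmin_r _ _)).
have [-> ->] := ext x Ix; have [-> _] := ext y Iy.
exact: near y Iy y_neq_x (Rlt_le_trans _ _ _ yx (Rmin_l _ _)).
Qed.

Lemma C1_int_increment_le_path_length {g : R -> Vec d} {a b L x y v M} :
  K x -> K y -> 0 <= M -> g a = x -> g b = y -> rect_path_len_le g a b L ->
  (forall s, a <= s <= b -> interiorV K (g s) \/ g s = x \/ g s = y) ->
  (forall s, a <= s <= b -> interiorV K (g s) -> vdist (G (g s)) v < M) ->
  Rabs (F y - dot v y - (F x - dot v x)) <= M * L.
Proof.
have [[_ f_deriv] [ext [F_cont _]]] := C1_f.
move=> Kx Ky M_ge0 ga gb g_rect g_in G_near.
have Kg s : a <= s <= b -> K (g s).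
  by move=> s_ab; case: (g_in s s_ab) => [/interior_sub | [-> | ->]].
have g_cont := rect_path_cont g_rect.
rewrite -ga -gb; apply: (path_mean_value_ineq (phi := fun s => F (g s) - dot v (g s)) M_ge0
  (cont_on_R_comp_path (cont_on_R_sub_dot v F_cont) g_cont Kg) g_rect) => s s_ab.
case: (g_in s s_ab) => [Ip | [gs | gs]]; last 2 first.
- by apply: Or31; rewrite gs ga.
- by apply: Or32; rewrite gs gb.
apply/Or33/(lipschitz_along_comp (H := fun z => F z - dot v z) g_cont s_ab).
have [r [r_gt0 ball]] := interior_ball Ip.
have [-> Gp] := ext _ Ip; have dfp_near := G_near s s_ab Ip; rewrite Gp in dfp_near.
have [delta [delta_gt0 lip]] := deriv_local_lipschitz f_deriv Ip dfp_near.
exists (Rmin delta r); split=> [|z zp]; first exact: Rmin_glb_lt.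
have Iz := ball z (Rlt_le_trans _ _ _ zp (Rmin_r _ _)).
have [-> _] := ext z Iz; exact: lip z Iz (Rlt_le_trans _ _ _ zp (Rmin_l _ _)).
Qed.

Lemma C1_int_deriv_at_short_paths {x C r} :
  K x -> 0 < C -> 0 < r -> short_paths_at K x C r -> deriv_at K F (G x) x.
Proof.
have [_ [_ [_ G_cont]]] := C1_f.
move=> Kx C_gt0 r_gt0 paths eps eps_gt0.
have M_gt0 : 0 < eps / (2 * C) by apply: Rdiv_lt_0_compat; lra.
have [delta [delta_gt0 G_near]] := G_cont x Kx _ M_gt0.
exists (Rmin r (delta / C)); split=> [|y Ky y_neq_x yx].
  by apply: Rmin_glb_lt => //; apply: Rdiv_lt_0_compat.
have [a [b [g [ga [gb [g_rect g_in]]]]]] := paths y Ky (Rlt_le_trans _ _ _ yx (Rmin_l _ _)).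
have len_lt : C * vdist x y < delta.
  rewrite vdistC; have := Rmult_lt_compat_l _ _ _ C_gt0 (Rlt_le_trans _ _ _ yx (Rmin_r _ _)).
  by have -> : C * (delta / C) = delta by field; lra.
have g_near s : a <= s <= b -> vdist (g s) x < delta.
  by move=> s_ab; have := rect_path_dist_le g_rect s_ab; rewrite ga; lra.
have := C1_int_increment_le_path_length Kx Ky (Rlt_le _ _ M_gt0) ga gb g_rect g_in
  (fun s s_ab Ig => G_near _ (interior_sub Ig) (g_near s s_ab)).
have -> : eps / (2 * C) * (C * vdist x y) = eps / 2 * vdist y x by rewrite vdistC; field; lra.
have yx_gt0 := vdist_gt0 y_neq_x; rewrite Rabs_div_pos // dot_vsubr => incr.
apply: (Rle_lt_trans _ (eps / 2)); last lra.
apply: (Rmult_le_reg_r (vdist y x)) => //.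
have -> : F y - F x - (dot (G x) y - dot (G x) x) = F y - dot (G x) y - (F x - dot (G x) x) by ring.
by have -> : forall q, q / vdist y x * vdist y x = q by move=> q; field; lra.
Qed.

End C1Interior.

Arguments C1_int_deriv_at_interior {d K f df F G} C1_f {x}.
Arguments C1_int_deriv_at_short_paths {d K f df F G} C1_f {x C r}.

Lemma C1_int_C1_on {d} (K : Vec d -> Prop) f df F G :
  (forall x, boundaryV K x -> exists C r, 0 < C /\ 0 < r /\ short_paths_at K x C r) ->
  C1_int_with K f df F G -> C1_on K F G.
Proof.
move=> paths C1_f; split=> [|x Kx]; first by case: C1_f => _ [_ [_]].
change (deriv_at K F (G x) x).
case: (classic (interiorV K x)) => [Ix | not_Ix].
  exact: (C1_int_deriv_at_interior C1_f Ix).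
have [C [r [C_gt0 [r_gt0 paths_x]]]] := paths x (not_interior_boundary Kx not_Ix).
exact: (C1_int_deriv_at_short_paths C1_f Kx C_gt0 r_gt0 paths_x).
Qed.

Theorem mainTheorem14 (d : nat) (K : Vec d -> Prop)
  (Hcpt : is_compact K) (Hreg : topologically_regular K)
  (Hpath : forall x, boundaryV K x ->
     exists C r, 0 < C /\ 0 < r /\
       forall y, K y -> vdist y x < r ->
         exists (a b : R) (g : R -> Vec d),
           g a = x /\ g b = y /\
           rect_path_len_le g a b (C * vdist x y) /\
           (forall s, a <= s <= b -> interiorV K (g s) \/ g s = x \/ g s = y)) :
  (forall f df F G, C1_int_with K f df F G -> C1_on K F G) /\
  (forall F G, C1_on K F G -> C1_int_with K F G F G).
Proof.
split=> [f df F G | F G]; [exact: C1_int_C1_on | exact: C1_on_C1_int].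
Qed.
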